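(* (a) There is a multi-valued function $F: \mathcal{C} \Rightarrow \mathcal{N}$ such that $F(x)$ is closed in $\mathcal{N}$ for every $x \in \mathcal{C}$, the graph of $F$ is a Borel subset of $\mathcal{C}\times\mathcal{N}$, and the set of points of continuity of $F$ is analytic and not Borel. (b) There is a multi-valued function $F: [0,1] \Rightarrow [0,1]$ whose graph is a Borel subset of $[0,1]\times[0,1]$ and whose set of points of continuity is analytic and not Borel.
   Context: $\mathcal{N}=\omega^\omega$ is the Baire space with the product topology (of discrete $\omega$), metrized by $d(\alpha,\beta) = 1/(\min\{n: \alpha(n)\ne\beta(n)\}+1)$ for $\alpha\neq\beta$; $\mathcal{C}=2^\omega\subseteq\mathcal{N}$ is the Cantor space with the induced metric. A multi-valued function $F: X \Rightarrow Y$ assigns to each $x$ a nonempty set $F(x)\subseteq Y$; its graph is $\{(x,y): y\in F(x)\}$. $F$ is continuous at $x$ if there is some $y \in F(x)$ such that for every $\varepsilon>0$ there is $\delta>0$ such that for every $x' \in B_p(x,\delta)$ there is $y' \in F(x')$ with $d(y,y')<\varepsilon$. A subset of a complete separable metric space is analytic if it is a continuous image of a closed subset of a complete separable metric space. *)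

From Stdlib Require Import Reals Lra ClassicalEpsilon.
Open Scope R_scope.

Section MetricNotions.
Context {X : Type} (d : X -> X -> R).

Definition is_metric : Prop :=
  (forall x y, 0 <= d x y) /\
  (forall x y, d x y = 0 <-> x = y) /\
  (forall x y, d x y = d y x) /\
  (forall x y z, d x z <= d x y + d y z).

Definition open_in (U : X -> Prop) : Prop :=
  forall x, U x -> exists r, 0 < r /\ forall y, d x y < r -> U y.

Definition closed_in (A : X -> Prop) : Prop :=
  open_in (fun x => ~ A x).

Definition borel (A : X -> Prop) : Prop :=
  forall S : (X -> Prop) -> Prop,
    (forall U, open_in U -> S U) ->
    (forall B, S B -> S (fun x => ~ B x)) ->
    (forall B : nat -> X -> Prop, (forall n, S (B n)) -> S (fun x => exists n, B n x)) ->
    S A.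

Definition cauchy_seq (u : nat -> X) : Prop :=
  forall eps, 0 < eps -> exists N, forall m n, (N <= m)%nat -> (N <= n)%nat -> d (u m) (u n) < eps.

Definition seq_converges (u : nat -> X) (l : X) : Prop :=
  forall eps, 0 < eps -> exists N, forall n, (N <= n)%nat -> d (u n) l < eps.

Definition complete_metric : Prop :=
  forall u, cauchy_seq u -> exists l, seq_converges u l.

(** separable: a countable (possibly empty) dense subset *)
Definition separable_metric : Prop :=
  exists s : nat -> option X,
    forall x eps, 0 < eps -> exists n y, s n = Some y /\ d x y < eps.

End MetricNotions.

Definition metric_continuous {P X : Type} (dP : P -> P -> R) (dX : X -> X -> R)
  (f : P -> X) : Prop :=
  forall x eps, 0 < eps -> exists delta, 0 < delta /\
    forall x', dP x x' < delta -> dX (f x) (f x') < eps.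

Definition analytic {X : Type} (dX : X -> X -> R) (A : X -> Prop) : Prop :=
  exists (P : Type) (dP : P -> P -> R),
    is_metric dP /\ complete_metric dP /\ separable_metric dP /\
    exists (C : P -> Prop) (f : P -> X),
      closed_in dP C /\ metric_continuous dP dX f /\
      forall x, A x <-> exists p, C p /\ f p = x.

(** Product (max) metric; it induces the product topology. *)
Definition prod_dist {X Y : Type} (dX : X -> X -> R) (dY : Y -> Y -> R)
  (p q : X * Y) : R := Rmax (dX (fst p) (fst q)) (dY (snd p) (snd q)).

Definition multi_valued {X Y : Type} (F : X -> Y -> Prop) : Prop :=
  forall x, exists y, F x y.

Definition mv_graph {X Y : Type} (F : X -> Y -> Prop) (p : X * Y) : Prop :=
  F (fst p) (snd p).

Definition mv_continuous_at {X Y : Type} (dX : X -> X -> R) (dY : Y -> Y -> R)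
  (F : X -> Y -> Prop) (x : X) : Prop :=
  exists y, F x y /\
    forall eps, 0 < eps -> exists delta, 0 < delta /\
      forall x', dX x x' < delta -> exists y', F x' y' /\ dY y y' < eps.

Definition mv_continuity_points {X Y : Type} (dX : X -> X -> R) (dY : Y -> Y -> R)
  (F : X -> Y -> Prop) : X -> Prop := mv_continuous_at dX dY F.

Definition baire := nat -> nat.

Definition baire_dist (a b : baire) : R :=
  match excluded_middle_informative (a = b) with
  | left _ => 0
  | right _ =>
      / (INR (epsilon (inhabits 0%nat)
                (fun n => a n <> b n /\ forall m, (m < n)%nat -> a m = b m)) + 1)
  end.

Definition cantor := { a : baire | forall n, (a n <= 1)%nat }.

Definition cantor_dist (a b : cantor) : R := baire_dist (proj1_sig a) (proj1_sig b).

Definition unit_interval := { x : R | 0 <= x <= 1 }.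

Definition ui_dist (x y : unit_interval) : R := Rabs (proj1_sig x - proj1_sig y).

From Stdlib Require Import Reals Lra Lia ZArith Cantor.
From Stdlib Require Import Classical ClassicalEpsilon FunctionalExtensionality PropExtensionality.
Open Scope R_scope.

(* Borel subsets of the Cantor space are Delta^1_1: they and their complements are projections
   of closed subsets of C x N.  Diagonalising against a universal closed set yields a projection
   D of a closed set Q whose complement is not such a projection, so D is analytic and not Borel.

   (a) F(x) consists of the y that either never vanish and encode (via y - 1) a point of the
   section Q_x, or vanish first at some n, encode before n a prefix that Q allows near x, and are
   afterwards constantly g(x), the indicator of "x is eventually zero".  If Q_x is nonempty, a non-vanishing value is a point of continuity, as nearby
   points receive values marked late; if Q_x is empty every value is marked at some n, and since g
   takes both values arbitrarily close to x, F is discontinuous at x.  So D is the continuity set.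

   (b) Embed C into [0,1] by e, base-4 expansion with digits 0 and 2, a homeomorphism onto a closed
   set K, and N into C by indicators of graphs.  Let F(t) be all of [0,1] off K and the image of
   the multifunction of (a) on K.  The continuity set is ([0,1] \ K) u e[D], whose trace on K is
   e[D]. *)

(** * Prefix agreement and the Baire metric *)

Definition agree (a b : baire) (n : nat) : Prop := forall i, (i < n)%nat -> a i = b i.

Lemma agree_refl a n : agree a a n.
Proof. intros i _; reflexivity. Qed.

Lemma agree_sym a b n : agree a b n -> agree b a n.
Proof. intros H i Hi; symmetry; auto. Qed.

Lemma agree_trans a b c n : agree a b n -> agree b c n -> agree a c n.
Proof. intros H1 H2 i Hi; rewrite H1; auto. Qed.

Lemma agree_le a b n m : agree a b n -> (m <= n)%nat -> agree a b m.
Proof. intros H Hm i Hi; apply H; lia. Qed.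

Lemma exists_least (P : nat -> Prop) :
  (exists n, P n) -> exists n, P n /\ forall m, (m < n)%nat -> ~ P m.
Proof.
  intros [n Hn]; revert Hn; induction n as [n IH] using (well_founded_ind Wf_nat.lt_wf).
  intros Hn; destruct (classic (exists m, (m < n)%nat /\ P m)) as [[m [Hm HPm]]|Hno].
  - exact (IH m Hm HPm).
  - exists n; split; auto; intros m Hm HPm; apply Hno; eauto.
Qed.

Definition first_diff (a b : baire) (n : nat) : Prop := a n <> b n /\ agree a b n.

Lemma first_diff_exists a b : a <> b -> exists n, first_diff a b n.
Proof.
  intro Hab.
  assert (Hex : exists n, a n <> b n).
  { apply not_all_ex_not; intro H; apply Hab, functional_extensionality, H. }
  destruct (exists_least _ Hex) as [n [Hn Hlt]].
  exists n; split; auto; intros m Hm; apply NNPP, Hlt, Hm.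
Qed.

Lemma first_diff_unique a b n n' : first_diff a b n -> first_diff a b n' -> n = n'.
Proof.
  intros [Hn Hagr] [Hn' Hagr'].
  destruct (Nat.lt_total n n') as [Hlt|[Heq|Hlt]]; auto; exfalso; [apply Hn|apply Hn']; auto.
Qed.

Definition inv_succ (n : nat) : R := / (INR n + 1).

Lemma inv_succ_pos n : 0 < inv_succ n.
Proof. apply Rinv_0_lt_compat; pose proof (pos_INR n); lra. Qed.

Lemma inv_succ_le n N : (N <= n)%nat -> inv_succ n <= inv_succ N.
Proof.
  intro H; apply Rinv_le_contravar; [pose proof (pos_INR N); lra|].
  apply le_INR in H; lra.
Qed.

Lemma inv_succ_lt_inv n N : inv_succ n < inv_succ N -> (N < n)%nat.
Proof.
  intro H; destruct (le_lt_dec n N) as [Hle|]; auto.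
  apply inv_succ_le in Hle; lra.
Qed.

Lemma inv_succ_small eps : 0 < eps -> exists N, inv_succ N < eps.
Proof.
  intro Heps; destruct (archimed_cor1 eps Heps) as [N [HN HN0]]; exists N.
  eapply Rle_lt_trans; [|exact HN].
  apply Rinv_le_contravar; [apply lt_0_INR|]; auto; lra.
Qed.

Lemma baire_dist_first_diff a b :
  a <> b -> exists n, first_diff a b n /\ baire_dist a b = inv_succ n.
Proof.
  intro Hab; unfold baire_dist.
  destruct (excluded_middle_informative (a = b)); [contradiction|].
  exists (epsilon (inhabits 0%nat) (first_diff a b)); split; [|reflexivity].
  apply epsilon_spec, first_diff_exists, Hab.
Qed.

Lemma baire_dist_refl a : baire_dist a a = 0.
Proof. unfold baire_dist; destruct (excluded_middle_informative (a = a)); congruence. Qed.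

Lemma baire_dist_nonneg a b : 0 <= baire_dist a b.
Proof.
  destruct (classic (a = b)) as [<-|Hab]; [rewrite baire_dist_refl; lra|].
  destruct (baire_dist_first_diff a b Hab) as [n [_ ->]]; left; apply inv_succ_pos.
Qed.

Lemma baire_dist_le_agree a b N : agree a b N -> baire_dist a b <= inv_succ N.
Proof.
  intro H; destruct (classic (a = b)) as [<-|Hab].
  - rewrite baire_dist_refl; left; apply inv_succ_pos.
  - destruct (baire_dist_first_diff a b Hab) as [n [[Hn _] ->]].
    apply inv_succ_le; destruct (le_lt_dec N n); auto; exfalso; auto.
Qed.

Lemma agree_of_baire_dist_lt a b N : baire_dist a b < inv_succ N -> agree a b (S N).
Proof.
  intro H; destruct (classic (a = b)) as [<-|Hab]; [apply agree_refl|].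
  destruct (baire_dist_first_diff a b Hab) as [n [[_ Hagr] Hd]]; rewrite Hd in H.
  apply inv_succ_lt_inv in H; eapply agree_le; eauto.
Qed.

Lemma agree_of_baire_dist_lt' a b N : baire_dist a b < inv_succ N -> agree a b N.
Proof. intro H; eapply agree_le; [apply agree_of_baire_dist_lt, H|lia]. Qed.

Lemma baire_metric : is_metric baire_dist.
Proof.
  split; [exact baire_dist_nonneg|split; [|split]].
  - intros a b; split; [|intros <-; apply baire_dist_refl].
    intro H; apply NNPP; intro Hab.
    destruct (baire_dist_first_diff a b Hab) as [n [_ Hd]]; pose proof (inv_succ_pos n); lra.
  - intros a b; destruct (classic (a = b)) as [<-|Hab]; auto.
    destruct (baire_dist_first_diff a b Hab) as [n [[Hn Hagr] ->]].
    destruct (baire_dist_first_diff b a (not_eq_sym Hab)) as [n' [Hn' ->]].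
    destruct Hn' as [Hn' Hagr'].
    rewrite (first_diff_unique a b n n'); [reflexivity|split; auto|split; auto using agree_sym].
  - (* ultrametric: the first difference of a and c is no earlier than that of a,b or of b,c *)
    intros a b c.
    pose proof (baire_dist_nonneg a b); pose proof (baire_dist_nonneg b c).
    destruct (classic (a = c)) as [<-|Hac]; [rewrite baire_dist_refl; lra|].
    destruct (baire_dist_first_diff a c Hac) as [n [[Hn _] ->]].
    assert (Hab_bc : ~ (agree a b (S n) /\ agree b c (S n))).
    { intros [H1 H2]; apply Hn; rewrite H1, H2; auto. }
    apply not_and_or in Hab_bc as [Hab|Hbc].
    + enough (baire_dist a b >= inv_succ n) by lra.
      apply Rnot_lt_ge; intro Hlt; apply Hab, agree_of_baire_dist_lt, Hlt.
    + enough (baire_dist b c >= inv_succ n) by lra.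
      apply Rnot_lt_ge; intro Hlt; apply Hbc, agree_of_baire_dist_lt, Hlt.
Qed.

Definition cv (x : cantor) : baire := proj1_sig x.
Coercion cv : cantor >-> baire.

Definition cantor_zero : cantor :=
  exist (fun a : baire => forall n, (a n <= 1)%nat) (fun _ => 0%nat) (fun _ => le_0_n 1).

Lemma cv_inj (x y : cantor) : cv x = cv y -> x = y.
Proof.
  destruct x as [x Hx], y as [y Hy]; unfold cv; simpl; intros <-.
  f_equal; apply proof_irrelevance.
Qed.

Lemma cantor_metric : is_metric cantor_dist.
Proof.
  destruct baire_metric as [Hpos [Hzero [Hsym Htri]]].
  split; [|split; [|split]]; intros; try apply Hpos; try apply Hsym; try apply Htri.
  unfold cantor_dist; rewrite Hzero; split; [apply cv_inj|intros ->; reflexivity].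
Qed.

Lemma cantor_dist_le_agree (x x' : cantor) N : agree x x' N -> cantor_dist x x' <= inv_succ N.
Proof. apply baire_dist_le_agree. Qed.

Lemma agree_of_cantor_dist_lt (x x' : cantor) N : cantor_dist x x' < inv_succ N -> agree x x' N.
Proof. apply agree_of_baire_dist_lt'. Qed.

Definition uval (t : unit_interval) : R := proj1_sig t.
Coercion uval : unit_interval >-> R.

Lemma uval_inj (s t : unit_interval) : uval s = uval t -> s = t.
Proof.
  destruct s as [s Hs], t as [t Ht]; unfold uval; simpl; intros <-.
  f_equal; apply proof_irrelevance.
Qed.

Lemma ui_dist_refl t : ui_dist t t = 0.
Proof. unfold ui_dist; rewrite Rminus_diag; apply Rabs_R0. Qed.

Lemma ui_metric : is_metric ui_dist.
Proof.
  unfold ui_dist; split; [|split; [|split]].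
  - intros; apply Rabs_pos.
  - intros s t; split; [|intros ->; rewrite Rminus_diag; apply Rabs_R0].
    intro H; apply uval_inj; unfold uval.
    destruct (Req_dec (proj1_sig s) (proj1_sig t)) as [|Hne]; auto.
    exfalso; revert H; apply Rabs_no_R0; lra.
  - intros; apply Rabs_minus_sym.
  - intros s t u.
    replace (proj1_sig s - proj1_sig u)
      with ((proj1_sig s - proj1_sig t) + (proj1_sig t - proj1_sig u)) by ring.
    apply Rabs_triang.
Qed.

Section ProductMetric.
Context {X Y : Type} (dX : X -> X -> R) (dY : Y -> Y -> R).

Lemma prod_dist_lt_fst p q r : prod_dist dX dY p q < r -> dX (fst p) (fst q) < r.
Proof. unfold prod_dist; pose proof (Rmax_l (dX (fst p) (fst q)) (dY (snd p) (snd q))); lra. Qed.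

Lemma prod_dist_lt_snd p q r : prod_dist dX dY p q < r -> dY (snd p) (snd q) < r.
Proof. unfold prod_dist; pose proof (Rmax_r (dX (fst p) (fst q)) (dY (snd p) (snd q))); lra. Qed.

Lemma prod_dist_lt p q r :
  dX (fst p) (fst q) < r -> dY (snd p) (snd q) < r -> prod_dist dX dY p q < r.
Proof. apply Rmax_lub_lt. Qed.

Lemma prod_metric : is_metric dX -> is_metric dY -> is_metric (prod_dist dX dY).
Proof.
  intros [Xpos [Xzero [Xsym Xtri]]] [Ypos [Yzero [Ysym Ytri]]]; unfold prod_dist.
  split; [|split; [|split]].
  - intros p q; eapply Rle_trans; [apply Xpos|apply Rmax_l].
  - intros [x y] [x' y']; simpl; split.
    + intro H; pose proof (Rmax_l (dX x x') (dY y y')); pose proof (Rmax_r (dX x x') (dY y y')).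
      pose proof (Xpos x x'); pose proof (Ypos y y').
      f_equal; [apply Xzero|apply Yzero]; lra.
    + intros [= <- <-]; rewrite (proj2 (Xzero x x) eq_refl), (proj2 (Yzero y y) eq_refl).
      apply Rmax_left; lra.
  - intros; rewrite Xsym, Ysym; reflexivity.
  - intros p q r; apply Rmax_lub.
    + eapply Rle_trans; [apply Xtri|]; apply Rplus_le_compat; apply Rmax_l.
    + eapply Rle_trans; [apply Ytri|]; apply Rplus_le_compat; apply Rmax_r.
Qed.

Lemma fst_continuous : metric_continuous (prod_dist dX dY) dX fst.
Proof. intros p eps Heps; exists eps; split; auto; intros q; apply prod_dist_lt_fst. Qed.

Lemma snd_continuous : metric_continuous (prod_dist dX dY) dY snd.
Proof. intros p eps Heps; exists eps; split; auto; intros q; apply prod_dist_lt_snd. Qed.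

End ProductMetric.

(** * Borel sets *)

Section BorelClosure.
Context {X : Type} (d : X -> X -> R).

Lemma borel_ext (A B : X -> Prop) : borel d A -> (forall x, A x <-> B x) -> borel d B.
Proof.
  intros H E; replace B with A; auto.
  apply functional_extensionality; intro x; apply propositional_extensionality; auto.
Qed.

Lemma borel_open U : open_in d U -> borel d U.
Proof. intros H S H1 H2 H3; auto. Qed.

Lemma borel_compl A : borel d A -> borel d (fun x => ~ A x).
Proof. intros H S H1 H2 H3; apply H2, H; auto. Qed.

Lemma borel_union (A : nat -> X -> Prop) :
  (forall n, borel d (A n)) -> borel d (fun x => exists n, A n x).
Proof. intros H S H1 H2 H3; apply H3; intro n; apply H; auto. Qed.

Lemma borel_inter (A : nat -> X -> Prop) :
  (forall n, borel d (A n)) -> borel d (fun x => forall n, A n x).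
Proof.
  intro H; apply borel_ext with (fun x => ~ exists n, ~ A n x).
  - apply borel_compl, borel_union; intro n; apply borel_compl, H.
  - intro x; split; [intros Hx n; apply NNPP; intro; apply Hx; eauto|intros Hx [n Hn]; auto].
Qed.

Lemma borel_union2 A B : borel d A -> borel d B -> borel d (fun x => A x \/ B x).
Proof.
  intros HA HB; apply borel_ext with (fun x => exists n, (if Nat.eqb n 0 then A else B) x).
  - apply borel_union; intro n; destruct (Nat.eqb n 0); auto.
  - intro x; split.
    + intros [n Hn]; destruct (Nat.eqb n 0); auto.
    + intros [H|H]; [exists 0%nat|exists 1%nat]; auto.
Qed.

Lemma borel_inter2 A B : borel d A -> borel d B -> borel d (fun x => A x /\ B x).
Proof.
  intros HA HB; apply borel_ext with (fun x => ~ (~ A x \/ ~ B x)).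
  - apply borel_compl, borel_union2; apply borel_compl; auto.
  - intro; tauto.
Qed.

Lemma borel_full : borel d (fun _ => True).
Proof. apply borel_open; intros x _; exists 1; split; [lra|auto]. Qed.

End BorelClosure.

Section ClosedSets.
Context {X : Type} (d : X -> X -> R).

Lemma closed_in_union2 A B : closed_in d A -> closed_in d B -> closed_in d (fun x => A x \/ B x).
Proof.
  intros HA HB x Hx; apply not_or_and in Hx as [HnA HnB].
  destruct (HA x HnA) as [r1 [Hr1 H1]], (HB x HnB) as [r2 [Hr2 H2]].
  exists (Rmin r1 r2); split; [apply Rmin_glb_lt; auto|]; intros y Hy [Hy'|Hy'].
  - apply (H1 y); [pose proof (Rmin_l r1 r2); lra|exact Hy'].
  - apply (H2 y); [pose proof (Rmin_r r1 r2); lra|exact Hy'].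
Qed.

Lemma closed_in_inter2 A B : closed_in d A -> closed_in d B -> closed_in d (fun x => A x /\ B x).
Proof.
  intros HA HB x Hx; apply not_and_or in Hx as [Hn|Hn];
    [destruct (HA x Hn) as [r [Hr H]]|destruct (HB x Hn) as [r [Hr H]]];
    exists r; split; auto; intros y Hy [HAy HBy]; eapply H; eauto.
Qed.

Lemma closed_in_forall {I : Type} (A : I -> X -> Prop) :
  (forall i, closed_in d (A i)) -> closed_in d (fun x => forall i, A i x).
Proof.
  intros HA x Hx; apply not_all_ex_not in Hx as [i Hi]; destruct (HA i x Hi) as [r [Hr H]].
  exists r; split; auto; intros y Hy HAy; apply (H y Hy), HAy.
Qed.

End ClosedSets.

Lemma closed_in_preimage {Z W : Type} (dZ : Z -> Z -> R) (dW : W -> W -> R) (f : Z -> W) B :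
  metric_continuous dZ dW f -> closed_in dW B -> closed_in dZ (fun z => B (f z)).
Proof.
  intros Hf HB z Hz; destruct (HB (f z) Hz) as [r [Hr H]]; destruct (Hf z r Hr) as [del [Hdel Hz']].
  exists del; split; auto; intros z' Hd; apply H, Hz', Hd.
Qed.

Definition continuous_on {Z W : Type} (dZ : Z -> Z -> R) (dW : W -> W -> R)
  (D : Z -> Prop) (phi : Z -> W) : Prop :=
  forall z, D z -> forall eps, 0 < eps -> exists delta, 0 < delta /\
    forall z', D z' -> dZ z z' < delta -> dW (phi z) (phi z') < eps.

Section BorelPreimage.
Context {Z W : Type} (dZ : Z -> Z -> R) (dW : W -> W -> R).
Hypothesis dZ_metric : is_metric dZ.
Variables (D : Z -> Prop) (phi : Z -> W).
Hypotheses (D_borel : borel dZ D) (phi_cont : continuous_on dZ dW D phi).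

(* The relative preimage is D intersected with the open union of the balls B(z,r), z in D,
   whose doubles are mapped into U. *)
Lemma borel_preimage_open U :
  open_in dW U -> borel dZ (fun z => D z /\ U (phi z)).
Proof.
  destruct dZ_metric as [_ [Hzero [_ Htri]]]; intro HU.
  set (V := fun z => exists z0 r, 0 < r /\ D z0 /\
              (forall q, D q -> dZ z0 q < 2 * r -> U (phi q)) /\ dZ z0 z < r).
  apply borel_ext with (fun z => D z /\ V z).
  - apply borel_inter2; auto; apply borel_open.
    intros z [z0 [r [Hr [Hz0 [Himg Hz]]]]]; exists (r - dZ z0 z); split; [lra|].
    intros y Hy; exists z0, r; repeat split; auto.
    pose proof (Htri z0 z y); lra.
  - intro z; split.
    + intros [Hz [z0 [r [Hr [Hz0 [Himg Hdist]]]]]]; split; auto; apply Himg; auto; lra.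
    + intros [Hz HUz]; split; auto.
      destruct (HU _ HUz) as [rho [Hrho Hball]].
      destruct (phi_cont z Hz rho Hrho) as [del [Hdel Hphi]].
      exists z, (del / 2); repeat split; auto; try lra.
      * intros q Hq Hzq; apply Hball, Hphi; auto; lra.
      * rewrite (proj2 (Hzero z z) eq_refl); lra.
Qed.

Lemma borel_preimage B : borel dW B -> borel dZ (fun z => D z /\ B (phi z)).
Proof.
  intro HB; apply HB with (S := fun B => borel dZ (fun z => D z /\ B (phi z))).
  - exact borel_preimage_open.
  - intros B0 HB0; apply borel_ext with (fun z => D z /\ ~ (D z /\ B0 (phi z))).
    + apply borel_inter2, borel_compl; auto.
    + intro; tauto.
  - intros Bn HBn; apply borel_ext with (fun z => exists n, D z /\ Bn n (phi z)).
    + apply borel_union; auto.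
    + intro z; split; [intros [n [Hz Hn]]; eauto|intros [Hz [n Hn]]; eauto].
Qed.

End BorelPreimage.

Lemma borel_preimage_total {Z W : Type} (dZ : Z -> Z -> R) (dW : W -> W -> R) (phi : Z -> W) :
  is_metric dZ -> metric_continuous dZ dW phi ->
  forall B, borel dW B -> borel dZ (fun z => B (phi z)).
Proof.
  intros Hm Hc B HB; apply borel_ext with (fun z => True /\ B (phi z)); [|intro; tauto].
  apply (borel_preimage dZ dW Hm); auto using borel_full.
  intros z _ eps Heps; destruct (Hc z eps Heps) as [del [Hdel Hz]]; eauto.
Qed.

Definition prefix_open {Z : Type} (f : Z -> baire) (A : Z -> Prop) : Prop :=
  forall z, A z -> exists N, forall z', agree (f z) (f z') N -> A z'.

Lemma prefix_open_open {Z : Type} (f : Z -> baire) (A : Z -> Prop) :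
  prefix_open f A -> open_in (fun z z' => baire_dist (f z) (f z')) A.
Proof.
  intros H z Hz; destruct (H z Hz) as [N HN]; exists (inv_succ N); split; [apply inv_succ_pos|].
  intros z' Hd; apply HN, agree_of_baire_dist_lt', Hd.
Qed.

Lemma open_prefix_open {Z : Type} (f : Z -> baire) (A : Z -> Prop) :
  open_in (fun z z' => baire_dist (f z) (f z')) A -> prefix_open f A.
Proof.
  intros H z Hz; destruct (H z Hz) as [r [Hr HA]]; destruct (inv_succ_small r Hr) as [N HN].
  exists N; intros z' Hagr; apply HA; pose proof (baire_dist_le_agree _ _ _ Hagr); lra.
Qed.

Definition prefix_open2 (A : cantor * baire -> Prop) : Prop :=
  forall p, A p -> exists N, forall p' : cantor * baire,
    agree (fst p) (fst p') N -> agree (snd p) (snd p') N -> A p'.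

Lemma prefix_open2_open A : prefix_open2 A -> open_in (prod_dist cantor_dist baire_dist) A.
Proof.
  intros H p Hp; destruct (H p Hp) as [N HN]; exists (inv_succ N); split; [apply inv_succ_pos|].
  intros p' Hd; apply HN; apply agree_of_baire_dist_lt';
    [apply (prod_dist_lt_fst cantor_dist baire_dist _ _ _ Hd)|
     apply (prod_dist_lt_snd cantor_dist baire_dist _ _ _ Hd)].
Qed.

Lemma prefix_closed2_borel A :
  prefix_open2 (fun p => ~ A p) -> borel (prod_dist cantor_dist baire_dist) A.
Proof.
  intro H; apply borel_ext with (fun p => ~ ~ A p); [|intro; tauto].
  apply borel_compl, borel_open, prefix_open2_open, H.
Qed.

(** * Analytic subsets of the Cantor space and a non-Borel one *)

Definition pair_nat (m k : nat) : nat := Cantor.to_nat (m, k).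
Definition unpair1 (i : nat) : nat := fst (Cantor.of_nat i).
Definition unpair2 (i : nat) : nat := snd (Cantor.of_nat i).

Lemma unpair1_pair m k : unpair1 (pair_nat m k) = m.
Proof. unfold unpair1, pair_nat; rewrite Cantor.cancel_of_to; reflexivity. Qed.

Lemma unpair2_pair m k : unpair2 (pair_nat m k) = k.
Proof. unfold unpair2, pair_nat; rewrite Cantor.cancel_of_to; reflexivity. Qed.

Lemma pair_unpair i : pair_nat (unpair1 i) (unpair2 i) = i.
Proof. unfold pair_nat, unpair1, unpair2; rewrite <- surjective_pairing; apply Cantor.cancel_to_of. Qed.

Lemma unpair1_le i : (unpair1 i <= i)%nat.
Proof.
  rewrite <- (pair_unpair i) at 2; unfold pair_nat.
  pose proof (Cantor.to_nat_non_decreasing (unpair1 i) (unpair2 i)); lia.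
Qed.

Fixpoint sup_below (h : nat -> nat) (N : nat) : nat :=
  match N with 0%nat => 0%nat | S N' => Nat.max (sup_below h N') (S (h N')) end.

Lemma lt_sup_below h N m : (m < N)%nat -> (h m < sup_below h N)%nat.
Proof.
  induction N as [|N IH]; intro Hm; [lia|simpl].
  destruct (Nat.eq_dec m N) as [->|]; [lia|specialize (IH ltac:(lia)); lia].
Qed.

Definition decode_seq (c : nat) (i : nat) : nat := unpair1 (Nat.iter i unpair2 c).

Fixpoint encode_prefix (a : baire) (N : nat) : nat :=
  match N with
  | 0%nat => 0%nat
  | S N' => pair_nat (a 0%nat) (encode_prefix (fun i => a (S i)) N')
  end.

Lemma agree_decode_encode a N : agree (decode_seq (encode_prefix a N)) a N.
Proof.
  revert a; induction N as [|N IH]; intros a [|i] Hi; try lia.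
  - apply unpair1_pair.
  - unfold decode_seq; rewrite Nat.iter_succ_r; simpl; rewrite unpair2_pair.
    apply (IH (fun j => a (S j))); lia.
Qed.

(* Every [k] codes the basic clopen box of pairs (x, b) with prescribed prefixes of length
   [unpair1 k], and every box has a code. *)
Definition in_box (k : nat) (x b : baire) : Prop :=
  agree (decode_seq (unpair1 (unpair2 k))) x (unpair1 k) /\
  agree (decode_seq (unpair2 (unpair2 k))) b (unpair1 k).

Definition box_code (n : nat) (x b : baire) : nat :=
  pair_nat n (pair_nat (encode_prefix x n) (encode_prefix b n)).

Lemma in_box_code n x b x' b' :
  in_box (box_code n x b) x' b' <-> agree x x' n /\ agree b b' n.
Proof.
  unfold in_box, box_code; rewrite !unpair1_pair, !unpair2_pair, !unpair1_pair.
  pose proof (agree_decode_encode x n); pose proof (agree_decode_encode b n).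
  split; intros [Hx Hb]; split; eapply agree_trans; eauto using agree_sym.
Qed.

Lemma in_box_agree k x b x' b' :
  in_box k x b -> agree x x' (unpair1 k) -> agree b b' (unpair1 k) -> in_box k x' b'.
Proof. intros [Hx Hb] Hxx Hbb; split; eapply agree_trans; eauto. Qed.

Definition closed_rel (Q : cantor -> baire -> Prop) : Prop :=
  forall x b, ~ Q x b -> exists N, forall (x' : cantor) b',
    agree x x' N -> agree b b' N -> ~ Q x' b'.

Definition sigma11 (A : cantor -> Prop) : Prop :=
  exists Q, closed_rel Q /\ forall x, A x <-> exists b, Q x b.

Lemma sigma11_ext A B : sigma11 A -> (forall x, A x <-> B x) -> sigma11 B.
Proof. intros [Q [HQ HA]] E; exists Q; split; auto; intro x; rewrite <- E; auto. Qed.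

Lemma sigma11_union (A : nat -> cantor -> Prop) :
  (forall n, sigma11 (A n)) -> sigma11 (fun x => exists n, A n x).
Proof.
  intro H; destruct (choice _ H) as [Qf HQ].
  exists (fun x b => Qf (b 0%nat) x (fun i => b (S i))); split.
  - intros x b Hn; destruct (proj1 (HQ (b 0%nat)) x _ Hn) as [N HN].
    exists (S N); intros x' b' Hx Hb.
    replace (b' 0%nat) with (b 0%nat) by (apply Hb; lia).
    apply HN; [eapply agree_le; eauto|intros i Hi; apply Hb; lia].
  - intro x; split.
    + intros [n Hn]; apply (proj2 (HQ n)) in Hn as [b Hb].
      exists (fun i => match i with 0%nat => n | S j => b j end); exact Hb.
    + intros [b Hb]; exists (b 0%nat); apply (proj2 (HQ (b 0%nat))); eauto.
Qed.

Lemma sigma11_inter (A : nat -> cantor -> Prop) :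
  (forall n, sigma11 (A n)) -> sigma11 (fun x => forall n, A n x).
Proof.
  intro H; destruct (choice _ H) as [Qf HQ].
  exists (fun x b => forall n, Qf n x (fun m => b (pair_nat n m))); split.
  - intros x b Hn; apply not_all_ex_not in Hn as [n Hn].
    destruct (proj1 (HQ n) x _ Hn) as [N HN].
    exists (N + sup_below (pair_nat n) N)%nat; intros x' b' Hx Hb HQ'.
    apply (HN x' (fun m => b' (pair_nat n m))); [eapply agree_le; eauto; lia| |apply HQ'].
    intros i Hi; apply Hb; pose proof (lt_sup_below (pair_nat n) N i Hi); lia.
  - intro x; split.
    + intro HA.
      destruct (choice (fun n b => Qf n x b) (fun n => proj1 (proj2 (HQ n) x) (HA n))) as [bs Hbs].
      exists (fun k => bs (unpair1 k) (unpair2 k)); intro n.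
      replace (fun m => bs (unpair1 (pair_nat n m)) (unpair2 (pair_nat n m))) with (bs n); auto.
      apply functional_extensionality; intro m; rewrite unpair1_pair, unpair2_pair; auto.
    + intros [b Hb] n; apply (proj2 (HQ n)); eauto.
Qed.

Lemma sigma11_open U : open_in cantor_dist U -> sigma11 U.
Proof.
  intro H; apply open_prefix_open in H.
  exists (fun (x : cantor) b => forall x' : cantor, agree x x' (b 0%nat) -> U x'); split.
  - intros x b Hn; apply not_all_ex_not in Hn as [x0 Hx0].
    exists (S (b 0%nat)); intros x' b' Hx Hb HU; apply Hx0; intro Hagr; apply HU.
    replace (b' 0%nat) with (b 0%nat) by (apply Hb; lia).
    apply agree_trans with (cv x); [apply agree_sym; eapply agree_le|]; eauto.
  - intro x; split.
    + intro Hx; destruct (H x Hx) as [N HN]; exists (fun _ => N); auto.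
    + intros [b Hb]; apply Hb, agree_refl.
Qed.

Lemma sigma11_closed U : open_in cantor_dist U -> sigma11 (fun x => ~ U x).
Proof.
  intro H; apply open_prefix_open in H.
  exists (fun (x : cantor) (_ : baire) => forall N, exists x' : cantor, agree x x' N /\ ~ U x').
  split.
  - intros x b Hn; apply not_all_ex_not in Hn as [N HN].
    exists N; intros x' b' Hx _ Hx'; apply HN.
    destruct (Hx' N) as [x2 [Hx2 HU]]; exists x2; split; eauto using agree_trans.
  - intro x; split.
    + intro Hx; exists (fun _ => 0%nat); intro N; exists x; split; auto using agree_refl.
    + intros [_ Hx] HU; destruct (H x HU) as [N HN]; destruct (Hx N) as [x' [Hagr HU']]; auto.
Qed.

Lemma borel_sigma11 A : borel cantor_dist A -> sigma11 A /\ sigma11 (fun x => ~ A x).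
Proof.
  intro H; apply H with (S := fun B => sigma11 B /\ sigma11 (fun x => ~ B x)).
  - intros U HU; split; [apply sigma11_open|apply sigma11_closed]; auto.
  - intros B [HB HnB]; split; auto; apply sigma11_ext with B; auto; intro; tauto.
  - intros B HB; split.
    + apply sigma11_union; intro n; apply HB.
    + apply sigma11_ext with (fun x => forall n, ~ B n x); [apply sigma11_inter; intro n; apply HB|].
      intro x; split; [intros Hx [n Hn]; apply (Hx n Hn)|intros Hx n Hn; eauto].
Qed.

(* The set of k with [cv a k = 1] codes the union of boxes forming the complement of the
   section of the universal closed set at [a]. *)
Definition universal_rel (a x : cantor) (b : baire) : Prop :=
  forall k, cv a k = 1%nat -> ~ in_box k x b.

Lemma closed_rel_universal Q : closed_rel Q -> exists a, forall x b, Q x b <-> universal_rel a x b.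
Proof.
  intro HQ.
  set (a := fun k => if excluded_middle_informative
                          (forall (x : cantor) b, in_box k x b -> ~ Q x b) then 1%nat else 0%nat).
  assert (Ha : forall k, (a k <= 1)%nat)
    by (intro k; unfold a; destruct (excluded_middle_informative _); lia).
  exists (exist _ a Ha); intros x b; unfold universal_rel, cv at 1; simpl; split.
  - intros Hxb k Hk Hbox; unfold a in Hk.
    destruct (excluded_middle_informative _) as [Hall|]; [exact (Hall x b Hbox Hxb)|discriminate].
  - intro H; apply NNPP; intro Hn; destruct (HQ x b Hn) as [N HN].
    apply (H (box_code N x b)); [|apply in_box_code; split; apply agree_refl].
    unfold a; destruct (excluded_middle_informative _) as [|Hnot]; auto.
    exfalso; apply Hnot; intros x' b' Hbox.
    apply (proj1 (in_box_code N x b x' b')) in Hbox as [Hx Hb]; auto.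
Qed.

Definition diag_rel (x : cantor) (b : baire) : Prop := universal_rel x x b.

Definition diag (x : cantor) : Prop := exists b, diag_rel x b.

Lemma diag_rel_closed : closed_rel diag_rel.
Proof.
  intros x b Hn; apply not_all_ex_not in Hn as [k Hk].
  apply imply_to_and in Hk as [Hk Hbox]; apply NNPP in Hbox.
  exists (S k + unpair1 k)%nat; intros x' b' Hx Hb HQ; apply (HQ k).
  - rewrite <- Hx by lia; exact Hk.
  - eapply in_box_agree; eauto; eapply agree_le; eauto; lia.
Qed.

Lemma compl_diag_not_sigma11 : ~ sigma11 (fun x => ~ diag x).
Proof.
  intros [Q [HQ HE]]; destruct (closed_rel_universal Q HQ) as [a Ha].
  assert (diag a <-> ~ diag a); [|tauto].
  unfold diag, diag_rel; split.
  - intros [b Hb]; apply HE; exists b; apply Ha, Hb.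
  - intro Hn; apply HE in Hn as [b Hb]; exists b; apply Ha, Hb.
Qed.

Lemma diag_not_borel A : (forall x, A x <-> diag x) -> ~ borel cantor_dist A.
Proof.
  intros E HB; apply compl_diag_not_sigma11.
  apply sigma11_ext with (fun x => ~ A x); [apply borel_sigma11, HB|].
  intro x; rewrite E; tauto.
Qed.

(** * A multifunction whose continuity set is a given analytic set *)

Definition eventually_zero (a : baire) : Prop := exists m, forall k, (m <= k)%nat -> a k = 0%nat.

Definition eventually_zero_ind (x : cantor) : nat :=
  if excluded_middle_informative (eventually_zero x) then 1%nat else 0%nat.

Definition splice (x : cantor) (M : nat) (c : nat) (Hc : (c <= 1)%nat) : cantor.
Proof.
  exists (fun i => if Nat.ltb i M then cv x i else c).
  intro i; destruct (Nat.ltb i M); [apply (proj2_sig x)|exact Hc].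
Defined.

Lemma agree_splice (x : cantor) M c Hc : agree x (splice x M c Hc) M.
Proof. intros i Hi; unfold cv at 2; simpl; apply Nat.ltb_lt in Hi; rewrite Hi; reflexivity. Qed.

Lemma splice_tail (x : cantor) M c Hc k : (M <= k)%nat -> cv (splice x M c Hc) k = c.
Proof. intro Hk; unfold cv at 1; simpl; apply Nat.ltb_ge in Hk; rewrite Hk; reflexivity. Qed.

Lemma eventually_zero_ind_oscillates x del :
  0 < del -> exists x', cantor_dist x x' < del /\ eventually_zero_ind x' <> eventually_zero_ind x.
Proof.
  intro Hdel; destruct (inv_succ_small del Hdel) as [M HM].
  assert (Hclose : forall c Hc, cantor_dist x (splice x M c Hc) < del).
  { intros c Hc; pose proof (cantor_dist_le_agree _ _ _ (agree_splice x M c Hc)); lra. }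
  assert (H1 : eventually_zero_ind (splice x M 0 (le_0_n 1)) = 1%nat).
  { unfold eventually_zero_ind; destruct (excluded_middle_informative _) as [|Hn]; auto.
    exfalso; apply Hn; exists M; apply splice_tail. }
  assert (H0 : eventually_zero_ind (splice x M 1 (le_n 1)) = 0%nat).
  { unfold eventually_zero_ind; destruct (excluded_middle_informative _) as [[m Hm]|]; auto.
    specialize (Hm (m + M)%nat ltac:(lia)); rewrite splice_tail in Hm; [discriminate|lia]. }
  unfold eventually_zero_ind at 2; destruct (excluded_middle_informative _).
  - exists (splice x M 1 (le_n 1)); split; [apply Hclose|rewrite H0; lia].
  - exists (splice x M 0 (le_0_n 1)); split; [apply Hclose|rewrite H1; lia].
Qed.

Definition pred_seq (y : baire) : baire := fun i => pred (y i).

Lemma agree_pred_seq y y' n : agree y y' n -> agree (pred_seq y) (pred_seq y') n.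
Proof. intros H i Hi; unfold pred_seq; rewrite H; auto. Qed.

Definition first_zero (y : baire) (n : nat) : Prop :=
  (forall i, (i < n)%nat -> y i <> 0%nat) /\ y n = 0%nat.

Lemma first_zero_unique y n m : first_zero y n -> first_zero y m -> n = m.
Proof.
  intros [Hn Hn0] [Hm Hm0].
  destruct (Nat.lt_total n m) as [Hlt|[|Hlt]]; auto; exfalso; [apply (Hm n)|apply (Hn m)]; auto.
Qed.

Lemma first_zero_agree y y' n : first_zero y n -> agree y y' (S n) -> first_zero y' n.
Proof.
  intros [Hn Hn0] Hagr; split; [intros i Hi; rewrite <- Hagr by lia; auto|rewrite <- Hagr by lia; auto].
Qed.

Lemma first_zero_exists y : (exists i, y i = 0%nat) -> exists n, first_zero y n.
Proof.
  intro H; destruct (exists_least _ H) as [n [Hn Hlt]]; exists n; split; auto.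
Qed.

Lemma eventually_zero_prefix_borel :
  borel (prod_dist cantor_dist baire_dist) (fun p => eventually_zero (fst p)).
Proof.
  apply borel_union; intro m; apply prefix_closed2_borel; intros p Hp.
  apply not_all_ex_not in Hp as [k Hk]; apply imply_to_and in Hk as [Hk Hnz].
  exists (S k); intros p' Hx _ Hp'; apply Hnz; rewrite Hx by lia; apply Hp'; auto.
Qed.

Lemma tail_const_borel n c :
  borel (prod_dist cantor_dist baire_dist) (fun p => forall j, (n < j)%nat -> snd p j = c).
Proof.
  apply prefix_closed2_borel; intros p Hp.
  apply not_all_ex_not in Hp as [j Hj]; apply imply_to_and in Hj as [Hj Hne].
  exists (S j); intros p' _ Hy Hp'; apply Hne; rewrite Hy by lia; auto.
Qed.

Section Multifunction.
Variable Q : cantor -> baire -> Prop.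
Hypothesis Q_closed : closed_rel Q.

Definition near_Q (n : nat) (x : cantor) (b : baire) : Prop :=
  exists (x' : cantor) b', agree x x' n /\ agree b b' n /\ Q x' b'.

Lemma near_Q_of_Q n x b : Q x b -> near_Q n x b.
Proof. intro H; exists x, b; repeat split; auto using agree_refl. Qed.

Lemma Q_of_near_Q x b : (forall n, near_Q n x b) -> Q x b.
Proof.
  intro H; apply NNPP; intro Hn; destruct (Q_closed x b Hn) as [N HN].
  destruct (H N) as [x' [b' [Hx [Hb HQ]]]]; exact (HN x' b' Hx Hb HQ).
Qed.

Lemma near_Q_agree n (x x2 : cantor) b b2 :
  agree x x2 n -> agree b b2 n -> near_Q n x b -> near_Q n x2 b2.
Proof.
  intros Hx Hb [x' [b' [Hx' [Hb' HQ]]]]; exists x', b'.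
  repeat split; auto; eapply agree_trans; eauto using agree_sym.
Qed.

Lemma near_Q_le n m x b : (n <= m)%nat -> near_Q m x b -> near_Q n x b.
Proof. intros H [x' [b' [Hx [Hb HQ]]]]; exists x', b'; repeat split; auto; eapply agree_le; eauto. Qed.

Definition mvF (x : cantor) (y : baire) : Prop :=
  ((forall i, y i <> 0%nat) /\ Q x (pred_seq y)) \/
  exists n, first_zero y n /\ near_Q n x (pred_seq y) /\
            forall j, (n < j)%nat -> y j = eventually_zero_ind x.

Lemma mvF_multi_valued : (exists x b, Q x b) -> multi_valued mvF.
Proof.
  intros [x0 [b0 Hx0]] x; exists (fun i => match i with 0%nat => 0%nat | _ => eventually_zero_ind x end).
  right; exists 0%nat; repeat split.
  - intros; lia.
  - exists x0, b0; repeat split; auto; intros i Hi; lia.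
  - intros [|j] Hj; [lia|reflexivity].
Qed.

Lemma mvF_compl_open_marked x y n :
  ~ mvF x y -> first_zero y n -> exists N, forall y', agree y y' N -> ~ mvF x y'.
Proof.
  intros Hy Hn.
  assert (Hnot : ~ (near_Q n x (pred_seq y) /\ forall j, (n < j)%nat -> y j = eventually_zero_ind x))
    by (intros [H1 H2]; apply Hy; right; eauto).
  apply not_and_or in Hnot as [Hfar|Htail].
  - exists (S n); intros y' Hagr [[Hnz _]|[m [Hm [Hnear _]]]].
    + apply (Hnz n); rewrite <- Hagr by lia; apply Hn.
    + rewrite <- (first_zero_unique y' n m (first_zero_agree y y' n Hn Hagr) Hm) in Hnear.
      apply Hfar; eapply near_Q_agree; [apply agree_refl| |exact Hnear].
      apply agree_pred_seq, agree_sym; eapply agree_le; eauto.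
  - apply not_all_ex_not in Htail as [j Hj]; apply imply_to_and in Hj as [Hj Hne].
    exists (S j); intros y' Hagr [[Hnz _]|[m [Hm [_ Htail]]]].
    + apply (Hnz n); rewrite <- Hagr by lia; apply Hn.
    + assert (Hy' : first_zero y' n) by (eapply first_zero_agree; eauto; eapply agree_le; eauto; lia).
      rewrite <- (first_zero_unique y' n m Hy' Hm) in Htail.
      apply Hne; rewrite Hagr by lia; auto.
Qed.

Lemma mvF_compl_open_unmarked x y :
  ~ mvF x y -> (forall i, y i <> 0%nat) -> exists N, forall y', agree y y' N -> ~ mvF x y'.
Proof.
  intros Hy Hnz.
  assert (Hfar : exists n, ~ near_Q n x (pred_seq y)).
  { apply not_all_ex_not; intro H; apply Hy; left; split; auto; apply Q_of_near_Q, H. }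
  destruct Hfar as [n Hn]; exists n; intros y' Hagr [[_ HQ]|[m [[_ Hm0] [Hnear _]]]].
  - apply Hn; eapply near_Q_agree; [apply agree_refl| |apply near_Q_of_Q, HQ].
    apply agree_pred_seq, agree_sym, Hagr.
  - destruct (le_lt_dec n m) as [Hle|Hlt].
    + apply Hn; eapply near_Q_agree; [apply agree_refl| |exact (near_Q_le n m _ _ Hle Hnear)].
      apply agree_pred_seq, agree_sym, Hagr.
    + apply (Hnz m); rewrite Hagr; auto.
Qed.

Lemma mvF_closed x : closed_in baire_dist (mvF x).
Proof.
  apply (prefix_open_open (fun y => y)); intros y Hy.
  destruct (classic (exists i, y i = 0%nat)) as [Hz|Hnz].
  - destruct (first_zero_exists y Hz) as [n Hn]; exact (mvF_compl_open_marked x y n Hy Hn).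
  - apply (mvF_compl_open_unmarked x y Hy); intros i Hi; apply Hnz; eauto.
Qed.

Lemma mvF_continuous_at_section x b : Q x b -> mv_continuous_at cantor_dist baire_dist mvF x.
Proof.
  intro Hxb; exists (fun i => S (b i)); split; [left; split; [intros; lia|exact Hxb]|].
  intros eps Heps; destruct (inv_succ_small eps Heps) as [N HN].
  exists (inv_succ N); split; [apply inv_succ_pos|]; intros x' Hx'.
  apply agree_of_cantor_dist_lt in Hx'.
  set (y' := fun i => if Nat.ltb i N then S (b i)
                      else if Nat.eqb i N then 0%nat else eventually_zero_ind x').
  assert (Hprefix : agree (fun i => S (b i)) y' N)
    by (intros i Hi; unfold y'; apply Nat.ltb_lt in Hi; rewrite Hi; reflexivity).
  exists y'; split.
  - right; exists N; repeat split.
    + intros i Hi; rewrite <- Hprefix by exact Hi; lia.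
    + unfold y'; rewrite Nat.ltb_irrefl, Nat.eqb_refl; reflexivity.
    + eapply near_Q_agree; [exact Hx'| |apply near_Q_of_Q, Hxb].
      exact (agree_pred_seq _ _ _ Hprefix).
    + intros j Hj; unfold y'; destruct (Nat.ltb_spec j N); [lia|].
      destruct (Nat.eqb_spec j N); [lia|reflexivity].
  - eapply Rle_lt_trans; [apply baire_dist_le_agree, Hprefix|exact HN].
Qed.

(* At a marked value y (first zero at n), a point x' near x where the indicator flips forces
   every value near y to disagree with y at position n + 1. *)
Lemma section_of_mvF_continuous_at x :
  mv_continuous_at cantor_dist baire_dist mvF x -> exists b, Q x b.
Proof.
  intros [y [[[_ HQ]|[n [Hn [_ Htail]]]] Hcont]]; [eauto|exfalso].
  destruct (Hcont (inv_succ (S n)) (inv_succ_pos _)) as [del [Hdel Hnear]].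
  destruct (eventually_zero_ind_oscillates x del Hdel) as [x' [Hx' Hflip]].
  destruct (Hnear x' Hx') as [y' [Hy' Hyy']]; apply agree_of_baire_dist_lt in Hyy'.
  destruct Hy' as [[Hnz _]|[m [Hm [_ Htail']]]].
  - apply (Hnz n); rewrite <- Hyy' by lia; apply Hn.
  - assert (Hy' : first_zero y' n) by (eapply first_zero_agree; eauto; eapply agree_le; eauto).
    rewrite <- (first_zero_unique y' n m Hy' Hm) in Htail'.
    apply Hflip; rewrite <- (Htail' (S n)), <- (Htail (S n)) by lia; symmetry; apply Hyy'; lia.
Qed.

Lemma mvF_continuity_points x :
  mv_continuity_points cantor_dist baire_dist mvF x <-> exists b, Q x b.
Proof.
  split; [apply section_of_mvF_continuous_at|intros [b Hb]; apply (mvF_continuous_at_section x b Hb)].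
Qed.

Lemma nonvanishing_part_borel :
  borel (prod_dist cantor_dist baire_dist)
    (fun p => (forall i, snd p i <> 0%nat) /\ Q (fst p) (pred_seq (snd p))).
Proof.
  apply prefix_closed2_borel; intros p Hp; apply not_and_or in Hp as [Hz|HnQ].
  - apply not_all_ex_not in Hz as [i Hi]; apply NNPP in Hi.
    exists (S i); intros p' _ Hy [Hnz _]; apply (Hnz i); rewrite <- Hy by lia; exact Hi.
  - assert (Hfar : exists n, ~ near_Q n (fst p) (pred_seq (snd p)))
      by (apply not_all_ex_not; intro H; apply HnQ, Q_of_near_Q, H).
    destruct Hfar as [n Hn]; exists n; intros p' Hx Hy [_ HQ]; apply Hn.
    eapply near_Q_agree; [apply agree_sym, Hx|apply agree_pred_seq, agree_sym, Hy|].
    apply near_Q_of_Q, HQ.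
Qed.

Lemma marked_part_borel n :
  borel (prod_dist cantor_dist baire_dist)
    (fun p => first_zero (snd p) n /\ near_Q n (fst p) (pred_seq (snd p))).
Proof.
  apply borel_open, prefix_open2_open; intros p [Hn Hnear]; exists (S n); intros p' Hx Hy.
  split; [eapply first_zero_agree; eauto|].
  eapply near_Q_agree; [| |exact Hnear]; [|apply agree_pred_seq]; eapply agree_le; eauto.
Qed.

Lemma mvF_graph_borel : borel (prod_dist cantor_dist baire_dist) (mv_graph mvF).
Proof.
  set (E := fun p : cantor * baire => eventually_zero (fst p)).
  apply borel_ext with (fun p =>
    ((forall i, snd p i <> 0%nat) /\ Q (fst p) (pred_seq (snd p))) \/
    exists n, (first_zero (snd p) n /\ near_Q n (fst p) (pred_seq (snd p))) /\
      ((E p /\ forall j, (n < j)%nat -> snd p j = 1%nat) \/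
       (~ E p /\ forall j, (n < j)%nat -> snd p j = 0%nat))).
  - apply borel_union2; [apply nonvanishing_part_borel|].
    apply borel_union; intro n; apply borel_inter2; [apply marked_part_borel|].
    apply borel_union2; apply borel_inter2; auto using borel_compl,
      eventually_zero_prefix_borel, tail_const_borel.
  - intros [x y]; unfold mv_graph, mvF, E, eventually_zero_ind; simpl.
    destruct (excluded_middle_informative _) as [Hev|Hev];
      split; intros [H|[n H]]; auto; right; exists n; tauto.
Qed.

End Multifunction.

(** * Polish spaces *)

Definition polish {P : Type} (d : P -> P -> R) : Prop :=
  is_metric d /\ complete_metric d /\ separable_metric d.

Lemma baire_complete_diag (u : nat -> baire) : cauchy_seq baire_dist u ->
  exists l, seq_converges baire_dist u l /\ forall i, exists n, l i = u n i.
Proof.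
  intro H.
  assert (HM : forall i, exists M, forall m n, (M <= m)%nat -> (M <= n)%nat -> agree (u m) (u n) (S i)).
  { intro i; destruct (H _ (inv_succ_pos i)) as [M HM]; exists M.
    intros m n Hm Hn; apply agree_of_baire_dist_lt; auto. }
  destruct (choice _ HM) as [M HMs]; exists (fun i => u (M i) i); split; [|eauto].
  intros eps Heps; destruct (inv_succ_small eps Heps) as [K HK]; exists (sup_below M K).
  intros n Hn; eapply Rle_lt_trans; [|exact HK]; apply baire_dist_le_agree.
  intros i Hi; apply (HMs i n (M i)); [pose proof (lt_sup_below M K i Hi); lia|lia|lia].
Qed.

Lemma baire_complete : complete_metric baire_dist.
Proof. intros u Hu; destruct (baire_complete_diag u Hu) as [l [Hl _]]; eauto. Qed.

Lemma cantor_complete : complete_metric cantor_dist.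
Proof.
  intros u Hu; destruct (baire_complete_diag (fun n => cv (u n)) Hu) as [l [Hl Hdiag]].
  assert (Hbin : forall i, (l i <= 1)%nat)
    by (intro i; destruct (Hdiag i) as [n ->]; apply (proj2_sig (u n))).
  exists (exist _ l Hbin); exact Hl.
Qed.

Lemma Un_cv_bounds (u : nat -> R) l n lo hi :
  Un_cv u l -> (forall m, (n <= m)%nat -> lo <= u m <= hi) -> lo <= l <= hi.
Proof.
  intros Hl Hb; split; apply Rnot_lt_le; intro H.
  - destruct (Hl (lo - l)) as [N HN]; [lra|].
    specialize (HN (N + n)%nat ltac:(lia)); specialize (Hb (N + n)%nat ltac:(lia)).
    unfold Rdist in HN; apply Rabs_def2 in HN; lra.
  - destruct (Hl (l - hi)) as [N HN]; [lra|].
    specialize (HN (N + n)%nat ltac:(lia)); specialize (Hb (N + n)%nat ltac:(lia)).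
    unfold Rdist in HN; apply Rabs_def2 in HN; lra.
Qed.

Lemma ui_complete : complete_metric ui_dist.
Proof.
  intros u Hu.
  assert (Hc : Cauchy_crit (fun n => uval (u n))).
  { intros eps Heps; destruct (Hu eps Heps) as [N HN]; exists N; intros n m Hn Hm; apply HN; lia. }
  destruct (R_complete _ Hc) as [l Hl].
  assert (Hbounds : 0 <= l <= 1)
    by (apply (Un_cv_bounds _ _ 0 _ _ Hl); intros m _; apply (proj2_sig (u m))).
  exists (exist _ l Hbounds); intros eps Heps; destruct (Hl eps Heps) as [N HN].
  exists N; intros n Hn; apply HN; lia.
Qed.

Lemma baire_separable : separable_metric baire_dist.
Proof.
  exists (fun k => Some (decode_seq k)); intros x eps Heps.
  destruct (inv_succ_small eps Heps) as [N HN].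
  exists (encode_prefix x N), (decode_seq (encode_prefix x N)); split; [reflexivity|].
  eapply Rle_lt_trans; [|exact HN]; apply baire_dist_le_agree, agree_sym, agree_decode_encode.
Qed.

Lemma min1_le n : (Nat.min 1 n <= 1)%nat.
Proof. lia. Qed.

Lemma cantor_separable : separable_metric cantor_dist.
Proof.
  exists (fun k => Some (exist (fun a : baire => forall n, (a n <= 1)%nat)
                          (fun i => Nat.min 1 (decode_seq k i)) (fun i => min1_le _))).
  intros x eps Heps; destruct (inv_succ_small eps Heps) as [N HN].
  eexists (encode_prefix x N), _; split; [reflexivity|].
  eapply Rle_lt_trans; [|exact HN]; apply baire_dist_le_agree; intros i Hi; simpl.
  rewrite (agree_decode_encode x N i Hi); pose proof (proj2_sig x i); unfold cv in *.
  destruct (proj1_sig x i) as [|[|k]]; simpl; lia.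
Qed.

Lemma floor_nat r : 0 <= r -> exists p : nat, INR p <= r < INR p + 1.
Proof.
  intro Hr; destruct (archimed r) as [Hup Hup'].
  assert (Hpos : (0 < up r)%Z) by (apply lt_IZR; simpl; lra).
  exists (Z.to_nat (up r - 1)); rewrite INR_IZR_INZ, Z2Nat.id, minus_IZR by lia; simpl; lra.
Qed.

Lemma clip_ratio_bounds p q : 0 <= Rmin 1 (INR p / INR (S q)) <= 1.
Proof.
  split; [|apply Rmin_l]; apply Rmin_glb; [lra|].
  apply Rmult_le_pos; [apply pos_INR|left; apply Rinv_0_lt_compat, lt_0_INR; lia].
Qed.

Lemma ui_separable : separable_metric ui_dist.
Proof.
  exists (fun k => Some (exist (fun t => 0 <= t <= 1) _ (clip_ratio_bounds (unpair1 k) (unpair2 k)))).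
  intros [t [Ht0 Ht1]] eps Heps; destruct (inv_succ_small eps Heps) as [q Hq].
  pose proof (inv_succ_pos q) as Hq0; unfold inv_succ in *.
  assert (Hq1 : 0 < INR q + 1) by (pose proof (pos_INR q); lra).
  destruct (floor_nat (t * (INR q + 1))) as [p [Hp1 Hp2]]; [apply Rmult_le_pos; lra|].
  eexists (pair_nat p q), _; split; [reflexivity|]; unfold ui_dist, uval; cbn [proj1_sig].
  rewrite unpair1_pair, unpair2_pair, S_INR.
  assert (Hlow : INR p / (INR q + 1) <= t).
  { apply Rmult_le_reg_r with (INR q + 1); auto; unfold Rdiv; rewrite Rmult_assoc, Rinv_l; lra. }
  assert (Hhigh : t - INR p / (INR q + 1) < / (INR q + 1)).
  { apply Rmult_lt_reg_r with (INR q + 1); auto; unfold Rdiv.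
    rewrite Rmult_minus_distr_r, Rmult_assoc, !Rinv_l; lra. }
  rewrite Rmin_right, Rabs_right; lra.
Qed.

Section ProductPolish.
Context {X Y : Type} (dX : X -> X -> R) (dY : Y -> Y -> R).

Lemma prod_complete : complete_metric dX -> complete_metric dY -> complete_metric (prod_dist dX dY).
Proof.
  intros cX cY u Hu.
  destruct (cX (fun n => fst (u n))) as [l1 H1].
  { intros eps Heps; destruct (Hu eps Heps) as [N HN]; exists N; intros m n Hm Hn.
    exact (prod_dist_lt_fst dX dY _ _ _ (HN m n Hm Hn)). }
  destruct (cY (fun n => snd (u n))) as [l2 H2].
  { intros eps Heps; destruct (Hu eps Heps) as [N HN]; exists N; intros m n Hm Hn.
    exact (prod_dist_lt_snd dX dY _ _ _ (HN m n Hm Hn)). }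
  exists (l1, l2); intros eps Heps.
  destruct (H1 eps Heps) as [N1 HN1], (H2 eps Heps) as [N2 HN2].
  exists (N1 + N2)%nat; intros n Hn; apply prod_dist_lt; [apply HN1|apply HN2]; lia.
Qed.

Lemma prod_separable :
  separable_metric dX -> separable_metric dY -> separable_metric (prod_dist dX dY).
Proof.
  intros [s1 H1] [s2 H2].
  exists (fun k => match s1 (unpair1 k), s2 (unpair2 k) with
                   | Some a, Some b => Some (a, b) | _, _ => None end).
  intros [x y] eps Heps.
  destruct (H1 x eps Heps) as [n1 [a [E1 D1]]], (H2 y eps Heps) as [n2 [b [E2 D2]]].
  exists (pair_nat n1 n2), (a, b); rewrite unpair1_pair, unpair2_pair, E1, E2.
  split; [reflexivity|apply prod_dist_lt; auto].
Qed.

Lemma prod_polish : polish dX -> polish dY -> polish (prod_dist dX dY).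
Proof.
  intros [mX [cX sX]] [mY [cY sY]].
  split; [apply prod_metric|split; [apply prod_complete|apply prod_separable]]; auto.
Qed.

End ProductPolish.

Lemma baire_polish : polish baire_dist.
Proof. split; [apply baire_metric|split; [apply baire_complete|apply baire_separable]]. Qed.

Lemma cantor_polish : polish cantor_dist.
Proof. split; [apply cantor_metric|split; [apply cantor_complete|apply cantor_separable]]. Qed.

Lemma ui_polish : polish ui_dist.
Proof. split; [apply ui_metric|split; [apply ui_complete|apply ui_separable]]. Qed.

Lemma closed_rel_closed Q :
  closed_rel Q -> closed_in (prod_dist cantor_dist baire_dist) (fun p => Q (fst p) (snd p)).
Proof.
  intro HQ; apply prefix_open2_open; intros [x b] Hn; destruct (HQ x b Hn) as [N HN].
  exists N; intros [x' b']; apply HN.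
Qed.

Lemma sigma11_analytic A : sigma11 A -> analytic cantor_dist A.
Proof.
  intros [Q [HQ HA]]; destruct (prod_polish _ _ cantor_polish baire_polish) as [Hm [Hc Hs]].
  exists (cantor * baire)%type, (prod_dist cantor_dist baire_dist).
  split; [exact Hm|split; [exact Hc|split; [exact Hs|]]].
  exists (fun p => Q (fst p) (snd p)), fst; split; [apply closed_rel_closed, HQ|split].
  - apply fst_continuous.
  - intro x; rewrite HA; split; [intros [b Hb]; exists (x, b); auto|intros [[x' b] [Hb <-]]; eauto].
Qed.

Definition diagF : cantor -> baire -> Prop := mvF diag_rel.

Lemma diagF_continuity_points x :
  mv_continuity_points cantor_dist baire_dist diagF x <-> diag x.
Proof. apply mvF_continuity_points. Qed.

Lemma diagF_multi_valued : multi_valued diagF.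
Proof.
  apply mvF_multi_valued.
  exists cantor_zero, (fun _ => 0%nat).
  intros k Hk; discriminate.
Qed.

Theorem part_a : exists F : cantor -> baire -> Prop,
  multi_valued F /\
  (forall x, closed_in baire_dist (F x)) /\
  borel (prod_dist cantor_dist baire_dist) (mv_graph F) /\
  analytic cantor_dist (mv_continuity_points cantor_dist baire_dist F) /\
  ~ borel cantor_dist (mv_continuity_points cantor_dist baire_dist F).
Proof.
  exists diagF; split; [apply diagF_multi_valued|split; [|split; [|split]]].
  - apply mvF_closed, diag_rel_closed.
  - apply mvF_graph_borel, diag_rel_closed.
  - apply sigma11_analytic; exists diag_rel; split; [apply diag_rel_closed|].
    intro x; rewrite diagF_continuity_points; reflexivity.
  - apply diag_not_borel, diagF_continuity_points.
Qed.

(** * The Cantor space in [0,1] and the Baire space in the Cantor space *)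

Definition quarter : R := / 4.

Lemma quarter_pow_pos n : 0 < quarter ^ n.
Proof. apply pow_lt; unfold quarter; lra. Qed.

Lemma quarter_pow_le n m : (m <= n)%nat -> quarter ^ n <= quarter ^ m.
Proof.
  intro H; replace n with (m + (n - m))%nat by lia; rewrite pow_add.
  pose proof (quarter_pow_pos m).
  assert (quarter ^ (n - m) <= 1)
    by (rewrite <- (pow1 (n - m)); apply pow_incr; unfold quarter; lra).
  rewrite <- (Rmult_1_r (quarter ^ m)) at 2; apply Rmult_le_compat_l; lra.
Qed.

Lemma quarter_pow_small eps : 0 < eps -> exists N, quarter ^ N < eps.
Proof.
  intro Heps; destruct (pow_lt_1_zero quarter ltac:(unfold quarter; rewrite Rabs_right; lra) eps Heps)
    as [N HN].
  exists N; specialize (HN N (le_n N)); rewrite Rabs_right in HN; auto.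
  left; apply quarter_pow_pos.
Qed.

(* The point of [0,1] with base-4 digits 2 x_0, 2 x_1, ...; distinct points of the Cantor space
   differing first at n are sent at distance at least 4^-(n+1)/3. *)
Lemma cantor_digit_bounds (x : cantor) i : 0 <= INR (cv x i) <= 1.
Proof.
  pose proof (proj2_sig x i) as H; unfold cv; destruct (proj1_sig x i) as [|[|]]; simpl; lra || lia.
Qed.

Fixpoint cantor_real_partial (a : baire) (n : nat) : R :=
  match n with
  | 0%nat => 0
  | S n' => cantor_real_partial a n' + 2 * INR (a n') * quarter ^ S n'
  end.

Lemma cantor_real_partial_incr (x : cantor) n k :
  0 <= cantor_real_partial x (n + k) - cantor_real_partial x n
    <= 2/3 * (quarter ^ n - quarter ^ (n + k)).
Proof.
  induction k as [|k IH]; [rewrite Nat.add_0_r; lra|].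
  rewrite Nat.add_succ_r; simpl cantor_real_partial.
  pose proof (cantor_digit_bounds x (n + k)); pose proof (quarter_pow_pos (n + k)).
  simpl pow; unfold quarter in *; split; nra.
Qed.

Lemma cantor_real_partial_agree a a' n :
  agree a a' n -> cantor_real_partial a n = cantor_real_partial a' n.
Proof.
  induction n as [|n IH]; intro H; simpl; auto.
  rewrite IH, (H n) by (try eapply agree_le; eauto); reflexivity.
Qed.

Lemma cantor_real_partial_growing (x : cantor) : Un_growing (cantor_real_partial x).
Proof. intro n; pose proof (cantor_real_partial_incr x n 1); rewrite Nat.add_1_r in H; lra. Qed.

Lemma cantor_real_partial_bounded (x : cantor) : has_ub (cantor_real_partial x).
Proof.
  exists (2/3); intros r [n ->]; pose proof (cantor_real_partial_incr x 0 n).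
  pose proof (quarter_pow_pos n); simpl in *; lra.
Qed.

Definition cantor_real (x : cantor) : R :=
  proj1_sig (growing_cv _ (cantor_real_partial_growing x) (cantor_real_partial_bounded x)).

Lemma cantor_real_approx x n :
  0 <= cantor_real x - cantor_real_partial x n <= 2/3 * quarter ^ n.
Proof.
  assert (Hcv : Un_cv (cantor_real_partial x) (cantor_real x)) by apply (proj2_sig (growing_cv _ _ _)).
  enough (cantor_real_partial x n <= cantor_real x <= cantor_real_partial x n + 2/3 * quarter ^ n)
    by lra.
  apply (Un_cv_bounds _ _ n _ _ Hcv); intros m Hm; replace m with (n + (m - n))%nat by lia.
  pose proof (cantor_real_partial_incr x n (m - n)); pose proof (quarter_pow_pos (n + (m - n))); lra.
Qed.

Lemma cantor_real_bounds x : 0 <= cantor_real x <= 1.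
Proof. pose proof (cantor_real_approx x 0); simpl in *; lra. Qed.

Definition cantor_ui (x : cantor) : unit_interval := exist _ (cantor_real x) (cantor_real_bounds x).

Lemma cantor_real_agree (x x' : cantor) n :
  agree x x' n -> Rabs (cantor_real x - cantor_real x') <= 2/3 * quarter ^ n.
Proof.
  intro H; pose proof (cantor_real_approx x n); pose proof (cantor_real_approx x' n).
  rewrite (cantor_real_partial_agree _ _ _ H) in *; apply Rabs_le; lra.
Qed.

Lemma agree_of_cantor_real_close (x x' : cantor) N :
  Rabs (cantor_real x - cantor_real x') < quarter ^ N -> agree x x' N.
Proof.
  intro H; apply NNPP; intro Hn.
  assert (Hex : exists m, (m < N)%nat /\ cv x m <> cv x' m).
  { apply NNPP; intro Hno; apply Hn; intros i Hi; apply NNPP; intro; apply Hno; eauto. }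
  destruct (exists_least _ Hex) as [m [[HmN Hm] Hlt]].
  assert (Hagr : agree x x' m).
  { intros i Hi; apply NNPP; intro; apply (Hlt i Hi); split; auto; lia. }
  pose proof (cantor_real_approx x (S m)) as A; pose proof (cantor_real_approx x' (S m)) as A'.
  simpl cantor_real_partial in A, A'; rewrite (cantor_real_partial_agree _ _ _ Hagr) in A.
  pose proof (quarter_pow_le N (S m) HmN); pose proof (quarter_pow_pos m).
  pose proof (proj2_sig x m) as B; pose proof (proj2_sig x' m) as B'; unfold cv in *.
  apply Rabs_def2 in H; simpl pow in *; unfold quarter in *.
  destruct (proj1_sig x m) as [|[|]], (proj1_sig x' m) as [|[|]]; try lia; simpl INR in *; lra.
Qed.

Lemma cantor_real_inj x x' : cantor_real x = cantor_real x' -> x = x'.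
Proof.
  intro H; apply cv_inj, functional_extensionality; intro i.
  apply (agree_of_cantor_real_close x x' (S i)); [|lia].
  rewrite H, Rminus_diag, Rabs_R0; apply quarter_pow_pos.
Qed.

Lemma cantor_real_modulus eps : 0 < eps -> exists N, forall x x' : cantor,
  agree x x' N -> Rabs (cantor_real x - cantor_real x') < eps.
Proof.
  intro Heps; destruct (quarter_pow_small eps Heps) as [N HN]; exists N; intros x x' H.
  pose proof (cantor_real_agree x x' N H); pose proof (quarter_pow_pos N); lra.
Qed.

Lemma cantor_ui_continuous : metric_continuous cantor_dist ui_dist cantor_ui.
Proof.
  intros x eps Heps; destruct (cantor_real_modulus eps Heps) as [N HN].
  exists (inv_succ N); split; [apply inv_succ_pos|]; intros x' Hx'.
  apply HN, agree_of_cantor_dist_lt, Hx'.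
Qed.

Lemma cantor_real_image_closed t :
  (forall m, exists x, Rabs (t - cantor_real x) < quarter ^ m) -> exists x, cantor_real x = t.
Proof.
  intro H.
  assert (H' : forall m, exists x, Rabs (t - cantor_real x) < quarter ^ S m / 2).
  { intro m; destruct (H (S (S m))) as [x Hx]; exists x.
    pose proof (quarter_pow_pos m); simpl pow in *; unfold quarter in *; lra. }
  destruct (choice _ H') as [xs Hxs].
  assert (Hcauchy : forall i j, (i <= j)%nat -> agree (xs i) (xs j) (S i)).
  { intros i j Hij; apply agree_of_cantor_real_close; pose proof (Hxs i); pose proof (Hxs j).
    pose proof (quarter_pow_le (S j) (S i) ltac:(lia)).
    replace (cantor_real (xs i) - cantor_real (xs j))
      with (- (t - cantor_real (xs i)) + (t - cantor_real (xs j))) by ring.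
    eapply Rle_lt_trans; [apply Rabs_triang|]; rewrite Rabs_Ropp; lra. }
  set (lim := exist (fun a : baire => forall n, (a n <= 1)%nat)
                (fun i => cv (xs i) i) (fun i => proj2_sig (xs i) i) : cantor).
  exists lim.
  assert (Hclose : forall m, Rabs (t - cantor_real lim) < 2 * quarter ^ m).
  { intro m; assert (Hagr : agree lim (xs m) (S m)) by (intros i Hi; apply (Hcauchy i m); lia).
    pose proof (cantor_real_agree _ _ _ Hagr); pose proof (Hxs m); pose proof (quarter_pow_pos m).
    replace (t - cantor_real lim)
      with ((t - cantor_real (xs m)) - (cantor_real lim - cantor_real (xs m))) by ring.
    eapply Rle_lt_trans; [apply Rabs_triang|]; rewrite Rabs_Ropp.
    simpl pow in *; unfold quarter in *; lra. }
  destruct (Req_dec (cantor_real lim) t) as [|Hne]; auto; exfalso.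
  assert (Hpos : 0 < Rabs (t - cantor_real lim)) by (apply Rabs_pos_lt; lra).
  destruct (quarter_pow_small (Rabs (t - cantor_real lim) / 2)) as [m Hm]; [lra|].
  specialize (Hclose m); lra.
Qed.

Lemma off_image_separated t :
  ~ (exists x, cantor_real x = t) -> exists m, forall x, quarter ^ m <= Rabs (t - cantor_real x).
Proof.
  intro H; apply NNPP; intro Hn; apply H, cantor_real_image_closed; intro m.
  apply NNPP; intro Hm; apply Hn; exists m; intro x.
  apply Rnot_lt_le; intro; apply Hm; eauto.
Qed.

(* [y] is sent to the indicator of its graph, read through the pairing of nat. *)
Definition baire_cantor (y : baire) : cantor.
Proof.
  exists (fun i => if Nat.eqb (y (unpair1 i)) (unpair2 i) then 1%nat else 0%nat).
  intro i; destruct (Nat.eqb _ _); lia.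
Defined.

Lemma baire_cantor_graph y m k : cv (baire_cantor y) (pair_nat m k) = 1%nat <-> y m = k.
Proof.
  unfold cv; simpl; rewrite unpair1_pair, unpair2_pair.
  destruct (Nat.eqb_spec (y m) k) as [Heq|Hne]; split; intro H; try discriminate; auto; contradiction.
Qed.

Lemma agree_baire_cantor y y' N : agree y y' N -> agree (baire_cantor y) (baire_cantor y') N.
Proof.
  intros H i Hi; unfold cv; simpl; rewrite H; [reflexivity|].
  pose proof (unpair1_le i); lia.
Qed.

Lemma agree_of_baire_cantor y y' N :
  agree (baire_cantor y) (baire_cantor y') (sup_below (fun m => pair_nat m (y m)) N) -> agree y y' N.
Proof.
  intros H m Hm; symmetry; apply baire_cantor_graph.
  rewrite <- H; [apply baire_cantor_graph; reflexivity|].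
  exact (lt_sup_below (fun m => pair_nat m (y m)) N m Hm).
Qed.

Lemma baire_cantor_inj y y' : baire_cantor y = baire_cantor y' -> y = y'.
Proof.
  intro H; apply functional_extensionality; intro m.
  apply (agree_of_baire_cantor y y' (S m)); [rewrite H; apply agree_refl|lia].
Qed.

Definition graph_code (z : cantor) : Prop :=
  forall m, (exists k, cv z (pair_nat m k) = 1%nat) /\
            (forall k k', cv z (pair_nat m k) = 1%nat -> cv z (pair_nat m k') = 1%nat -> k = k').

Lemma graph_code_iff z : graph_code z <-> exists y, baire_cantor y = z.
Proof.
  split.
  - intro H; destruct (choice _ (fun m => proj1 (H m))) as [y Hy]; exists y.
    apply cv_inj, functional_extensionality; intro i; rewrite <- (pair_unpair i).
    destruct (Nat.eq_dec (y (unpair1 i)) (unpair2 i)) as [Heq|Hne].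
    + rewrite (proj2 (baire_cantor_graph _ _ _) Heq), <- Heq; symmetry; apply Hy.
    + pose proof (proj2_sig z (pair_nat (unpair1 i) (unpair2 i))) as Hbin; fold (cv z) in Hbin.
      unfold cv at 1; simpl; rewrite unpair1_pair, unpair2_pair.
      destruct (Nat.eqb_spec (y (unpair1 i)) (unpair2 i)) as [|_]; [contradiction|].
      destruct (cv z (pair_nat (unpair1 i) (unpair2 i))) as [|[|]] eqn:E; auto; [|lia].
      exfalso; apply Hne, (proj2 (H (unpair1 i))); auto.
  - intros [y <-] m; split.
    + exists (y m); apply baire_cantor_graph; reflexivity.
    + intros k k' Hk Hk'; rewrite baire_cantor_graph in Hk, Hk'; congruence.
Qed.

Lemma graph_code_borel : borel cantor_dist graph_code.
Proof.
  apply borel_inter; intro m; apply borel_inter2.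
  - apply borel_union; intro k; apply borel_open, (prefix_open_open cv).
    intros x Hx; exists (S (pair_nat m k)); intros x' H; rewrite <- H by lia; auto.
  - apply borel_inter; intro k; apply borel_inter; intro k'.
    apply borel_open, (prefix_open_open cv).
    intros x Hx; exists (S (pair_nat m k) + S (pair_nat m k'))%nat; intros x' H H1 H2.
    apply Hx; rewrite H by lia; auto.
Qed.

(** * Transport to the unit interval *)

Definition on_image (t : R) : Prop := exists x, cantor_real x = t.

Definition transF (t u : unit_interval) : Prop :=
  ~ on_image t \/
  exists x y, cantor_real x = t /\ uval u = cantor_real (baire_cantor y) /\ diagF x y.

Lemma off_image_open (t : unit_interval) :
  ~ on_image t -> exists r, 0 < r /\ forall t' : unit_interval, ui_dist t t' < r -> ~ on_image t'.
Proof.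
  intro H; destruct (off_image_separated t H) as [m Hm]; pose proof (quarter_pow_pos m).
  exists (quarter ^ m); split; auto; intros t' Ht' [x Hx]; specialize (Hm x).
  unfold ui_dist in Ht'; fold (uval t) (uval t') in Ht'; rewrite <- Hx in Ht'; lra.
Qed.

Lemma transF_multi_valued : multi_valued transF.
Proof.
  intro t; destruct (classic (on_image t)) as [[x Hx]|Hoff]; [|exists t; left; exact Hoff].
  destruct (diagF_multi_valued x) as [y Hy].
  exists (cantor_ui (baire_cantor y)); right; exists x, y; auto.
Qed.

Lemma transF_on_image x (t u : unit_interval) :
  cantor_real x = t -> transF t u -> exists y, uval u = cantor_real (baire_cantor y) /\ diagF x y.
Proof.
  intros Hx [Hoff|[x' [y [Hx' [Hu Hy]]]]]; [exfalso; apply Hoff; exists x; exact Hx|].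
  exists y; split; auto; rewrite (cantor_real_inj x x') by congruence; exact Hy.
Qed.

Lemma transF_continuous_off_image (t : unit_interval) :
  ~ on_image t -> mv_continuous_at ui_dist ui_dist transF t.
Proof.
  intro Hoff; exists t; split; [left; exact Hoff|]; intros eps Heps.
  destruct (off_image_open t Hoff) as [r [Hr Hball]]; exists r; split; auto.
  intros t' Ht'; exists t; split; [left; apply Hball, Ht'|rewrite ui_dist_refl; exact Heps].
Qed.

Lemma diagF_continuous_of_transF x (t : unit_interval) :
  cantor_real x = t -> mv_continuous_at ui_dist ui_dist transF t ->
  mv_continuous_at cantor_dist baire_dist diagF x.
Proof.
  intros Hx [u [Hu Hcont]]; destruct (transF_on_image x t u Hx Hu) as [y [Huy Hy]].
  exists y; split; auto; intros eps Heps; destruct (inv_succ_small eps Heps) as [N HN].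
  set (K := sup_below (fun m => pair_nat m (y m)) N).
  destruct (Hcont (quarter ^ K) (quarter_pow_pos K)) as [del [Hdel Hnear]].
  destruct (cantor_real_modulus del Hdel) as [M HM].
  exists (inv_succ M); split; [apply inv_succ_pos|]; intros x' Hx'.
  destruct (Hnear (cantor_ui x')) as [u' [Hu' Hdu]].
  { unfold ui_dist; fold (uval t); rewrite <- Hx; apply HM, agree_of_cantor_dist_lt, Hx'. }
  destruct (transF_on_image x' (cantor_ui x') u' eq_refl Hu') as [y' [Huy' Hy']].
  exists y'; split; auto; eapply Rle_lt_trans; [apply baire_dist_le_agree|exact HN].
  apply agree_of_baire_cantor, agree_of_cantor_real_close.
  unfold ui_dist in Hdu; fold (uval u) (uval u') in Hdu; rewrite <- Huy, <- Huy'; exact Hdu.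
Qed.

Lemma transF_continuous_of_diagF x (t : unit_interval) :
  cantor_real x = t -> mv_continuous_at cantor_dist baire_dist diagF x ->
  mv_continuous_at ui_dist ui_dist transF t.
Proof.
  intros Hx [y [Hy Hcont]]; exists (cantor_ui (baire_cantor y)); split; [right; exists x, y; auto|].
  intros eps Heps; destruct (cantor_real_modulus eps Heps) as [N HN].
  destruct (Hcont (inv_succ N) (inv_succ_pos N)) as [del [Hdel Hnear]].
  destruct (inv_succ_small del Hdel) as [M HM].
  exists (quarter ^ M); split; [apply quarter_pow_pos|]; intros t' Ht'.
  destruct (classic (on_image t')) as [[x' Hx']|Hoff];
    [|exists (cantor_ui (baire_cantor y)); split; [left; exact Hoff|rewrite ui_dist_refl; exact Heps]].
  assert (Hxx' : cantor_dist x x' < del).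
  { eapply Rle_lt_trans; [apply cantor_dist_le_agree, agree_of_cantor_real_close|exact HM].
    unfold ui_dist in Ht'; fold (uval t) (uval t') in Ht'; rewrite <- Hx, <- Hx' in Ht'; exact Ht'. }
  destruct (Hnear x' Hxx') as [y' [Hy' Hyy']].
  exists (cantor_ui (baire_cantor y')); split; [right; exists x', y'; auto|].
  apply HN, agree_baire_cantor, agree_of_baire_dist_lt', Hyy'.
Qed.

Lemma transF_continuity_points (t : unit_interval) :
  mv_continuity_points ui_dist ui_dist transF t <->
  ~ on_image t \/ exists x, cantor_real x = t /\ diag x.
Proof.
  unfold mv_continuity_points; split.
  - intro Hcont; destruct (classic (on_image t)) as [[x Hx]|Hoff]; [right|left; exact Hoff].
    exists x; split; auto; apply diagF_continuity_points, (diagF_continuous_of_transF x t Hx Hcont).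
  - intros [Hoff|[x [Hx Hdiag]]]; [apply transF_continuous_off_image, Hoff|].
    apply (transF_continuous_of_diagF x t Hx), diagF_continuity_points, Hdiag.
Qed.

Lemma transF_not_borel : ~ borel ui_dist (mv_continuity_points ui_dist ui_dist transF).
Proof.
  intro HB; apply (borel_preimage_total cantor_dist ui_dist cantor_ui cantor_metric cantor_ui_continuous)
    in HB; revert HB.
  apply diag_not_borel; intro x; rewrite transF_continuity_points; simpl; split.
  - intros [Hoff|[x' [Hx' Hdiag]]]; [exfalso; apply Hoff; exists x; reflexivity|].
    rewrite <- (cantor_real_inj x' x Hx'); exact Hdiag.
  - intro Hdiag; right; exists x; auto.
Qed.

Definition param_space : Type := unit_interval * (cantor * baire).
Definition param_dist : param_space -> param_space -> R :=
  prod_dist ui_dist (prod_dist cantor_dist baire_dist).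

Lemma param_polish : polish param_dist.
Proof.
  apply prod_polish; [apply ui_polish|apply prod_polish; [apply cantor_polish|apply baire_polish]].
Qed.

Lemma cantor_real_graph_closed :
  closed_in param_dist (fun p : param_space => cantor_real (fst (snd p)) = fst p).
Proof.
  intros [t [x b]] Hne; simpl in Hne.
  assert (HD : 0 < Rabs (cantor_real x - t)) by (apply Rabs_pos_lt; lra).
  destruct (cantor_real_modulus (Rabs (cantor_real x - t) / 2)) as [M HM]; [lra|].
  exists (Rmin (Rabs (cantor_real x - t) / 2) (inv_succ M)).
  split; [apply Rmin_glb_lt; [lra|apply inv_succ_pos]|]; intros [t' [x' b']] Hd Heq; simpl in Heq.
  pose proof (Rmin_l (Rabs (cantor_real x - t) / 2) (inv_succ M)).
  pose proof (Rmin_r (Rabs (cantor_real x - t) / 2) (inv_succ M)).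
  pose proof (prod_dist_lt_fst _ _ _ _ _ Hd) as Ht; pose proof (prod_dist_lt_snd _ _ _ _ _ Hd) as Hxb.
  apply prod_dist_lt_fst in Hxb; simpl in Ht, Hxb.
  assert (Hx : Rabs (cantor_real x - cantor_real x') < Rabs (cantor_real x - t) / 2)
    by (apply HM, agree_of_cantor_dist_lt; lra).
  unfold ui_dist in Ht; fold (uval t) (uval t') in Ht; rewrite Heq in Hx.
  pose proof (Rabs_triang (cantor_real x - t') (t' - t)).
  replace (cantor_real x - t' + (t' - t)) with (cantor_real x - t) in * by ring.
  rewrite Rabs_minus_sym in Ht; lra.
Qed.

Lemma separated_closed x' :
  closed_in param_dist
    (fun p : param_space => quarter ^ (snd (snd p) 0%nat) <= Rabs (fst p - cantor_real x')).
Proof.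
  intros [t [x b]] Hlt; simpl in Hlt; apply Rnot_le_lt in Hlt.
  set (D := quarter ^ b 0%nat - Rabs (t - cantor_real x')).
  exists (Rmin D 1); split; [apply Rmin_glb_lt; unfold D; lra|].
  intros [t' [x2 b']] Hd Hle; simpl in Hle.
  pose proof (Rmin_l D 1); pose proof (Rmin_r D 1).
  pose proof (prod_dist_lt_fst _ _ _ _ _ Hd) as Ht; pose proof (prod_dist_lt_snd _ _ _ _ _ Hd) as Hxb.
  apply prod_dist_lt_snd in Hxb; simpl in Ht, Hxb.
  replace (b' 0%nat) with (b 0%nat) in Hle
    by (apply (agree_of_baire_dist_lt b b' 0); [unfold inv_succ; simpl; lra|lia]).
  unfold ui_dist in Ht; fold (uval t) (uval t') in Ht.
  pose proof (Rabs_triang (t' - t) (t - cantor_real x')).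
  replace (t' - t + (t - cantor_real x')) with (t' - cantor_real x') in * by ring.
  rewrite Rabs_minus_sym in Ht; unfold D in *; lra.
Qed.

(* A point off the image of the Cantor space is separated from it by some 4^-m, and [m] is
   recorded in the Baire coordinate. *)
Lemma transF_analytic : analytic ui_dist (mv_continuity_points ui_dist ui_dist transF).
Proof.
  destruct param_polish as [Hm [Hc Hs]].
  exists param_space, param_dist; split; [exact Hm|split; [exact Hc|split; [exact Hs|]]].
  exists (fun p : param_space =>
            (cantor_real (fst (snd p)) = fst p /\ diag_rel (fst (snd p)) (snd (snd p))) \/
            forall x', quarter ^ (snd (snd p) 0%nat) <= Rabs (fst p - cantor_real x')), fst.
  split; [|split; [apply fst_continuous|]].
  - apply closed_in_union2; [apply closed_in_inter2|apply closed_in_forall, separated_closed].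
    + apply cantor_real_graph_closed.
    + apply (closed_in_preimage param_dist (prod_dist cantor_dist baire_dist) snd
               (fun p => diag_rel (fst p) (snd p)));
        [apply snd_continuous|apply closed_rel_closed, diag_rel_closed].
  - intro t; rewrite transF_continuity_points; split.
    + intros [Hoff|[x [Hx [b Hb]]]]; [|exists (t, (x, b)); auto].
      destruct (off_image_separated t Hoff) as [m Hsep].
      exists (t, (cantor_zero, fun _ => m)); auto.
    + intros [[t' [x b]] [[[Hx Hb]|Hsep] <-]]; simpl in *; [right; exists x; split; [|exists b]; auto|].
      left; intros [x' Hx']; specialize (Hsep x'); rewrite Hx', Rminus_diag, Rabs_R0 in Hsep.
      pose proof (quarter_pow_pos (b 0%nat)); lra.
Qed.

Definition inv_on {A B : Type} (f : A -> B) (a0 : A) (b : B) : A :=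
  match excluded_middle_informative (exists a, f a = b) with
  | left H => proj1_sig (constructive_indefinite_description _ H)
  | right _ => a0
  end.

Lemma inv_on_spec {A B : Type} (f : A -> B) a0 b : (exists a, f a = b) -> f (inv_on f a0 b) = b.
Proof.
  intro H; unfold inv_on; destruct (excluded_middle_informative _) as [H'|]; [|contradiction].
  exact (proj2_sig (constructive_indefinite_description _ H')).
Qed.

Definition cantor_real_inv (t : unit_interval) : cantor := inv_on cantor_real cantor_zero (uval t).

Definition baire_real (y : baire) : R := cantor_real (baire_cantor y).

Definition baire_real_inv (u : unit_interval) : baire := inv_on baire_real (fun _ => 0%nat) (uval u).

Definition on_baire_image (u : R) : Prop := exists y, baire_real y = u.

Lemma on_image_borel : borel ui_dist (fun t : unit_interval => on_image t).
Proof.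
  apply borel_ext with (fun t : unit_interval => ~ ~ on_image t); [|intro; tauto].
  apply borel_compl, borel_open; intros t Hoff; exact (off_image_open t Hoff).
Qed.

Lemma cantor_real_inv_continuous :
  continuous_on ui_dist cantor_dist (fun t : unit_interval => on_image t) cantor_real_inv.
Proof.
  intros t Ht eps Heps; destruct (inv_succ_small eps Heps) as [N HN].
  exists (quarter ^ N); split; [apply quarter_pow_pos|]; intros t' Ht' Hd.
  eapply Rle_lt_trans; [apply cantor_dist_le_agree, agree_of_cantor_real_close|exact HN].
  unfold cantor_real_inv; rewrite !inv_on_spec by assumption; exact Hd.
Qed.

Lemma on_baire_image_borel : borel ui_dist (fun u : unit_interval => on_baire_image u).
Proof.
  apply borel_ext with (fun u : unit_interval => on_image u /\ graph_code (cantor_real_inv u)).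
  - apply (borel_preimage ui_dist cantor_dist ui_metric); auto using on_image_borel,
      cantor_real_inv_continuous, graph_code_borel.
  - intro u; split.
    + intros [Hu Hcode]; apply graph_code_iff in Hcode as [y Hy]; exists y.
      unfold baire_real; rewrite Hy; apply inv_on_spec, Hu.
    + intros [y Hy]; split; [exists (baire_cantor y); exact Hy|].
      apply graph_code_iff; exists y; apply cantor_real_inj.
      unfold cantor_real_inv; rewrite inv_on_spec; [exact Hy|exists (baire_cantor y); exact Hy].
Qed.

Lemma baire_real_inv_continuous :
  continuous_on ui_dist baire_dist (fun u : unit_interval => on_baire_image u) baire_real_inv.
Proof.
  intros u Hu eps Heps; destruct (inv_succ_small eps Heps) as [N HN].
  set (K := sup_below (fun m => pair_nat m (baire_real_inv u m)) N).
  exists (quarter ^ K); split; [apply quarter_pow_pos|]; intros u' Hu' Hd.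
  eapply Rle_lt_trans; [apply baire_dist_le_agree, agree_of_baire_cantor|exact HN].
  apply agree_of_cantor_real_close.
  fold (baire_real (baire_real_inv u)) (baire_real (baire_real_inv u')).
  unfold baire_real_inv; rewrite !inv_on_spec by assumption; exact Hd.
Qed.

Lemma inverse_pair_continuous :
  continuous_on (prod_dist ui_dist ui_dist) (prod_dist cantor_dist baire_dist)
    (fun p : unit_interval * unit_interval => on_image (fst p) /\ on_baire_image (snd p))
    (fun p => (cantor_real_inv (fst p), baire_real_inv (snd p))).
Proof.
  intros [t u] [Ht Hu] eps Heps.
  destruct (cantor_real_inv_continuous t Ht eps Heps) as [d1 [Hd1 H1]].
  destruct (baire_real_inv_continuous u Hu eps Heps) as [d2 [Hd2 H2]].
  exists (Rmin d1 d2); split; [apply Rmin_glb_lt; auto|]; intros [t' u'] [Ht' Hu'] Hd.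
  pose proof (Rmin_l d1 d2); pose proof (Rmin_r d1 d2).
  pose proof (prod_dist_lt_fst _ _ _ _ _ Hd); pose proof (prod_dist_lt_snd _ _ _ _ _ Hd).
  apply prod_dist_lt; [apply H1|apply H2]; simpl in *; auto; lra.
Qed.

Lemma transF_graph_borel : borel (prod_dist ui_dist ui_dist) (mv_graph transF).
Proof.
  set (D := fun p : unit_interval * unit_interval => on_image (fst p) /\ on_baire_image (snd p)).
  set (phi := fun p : unit_interval * unit_interval =>
                (cantor_real_inv (fst p), baire_real_inv (snd p))).
  assert (Hm : is_metric (prod_dist ui_dist ui_dist)) by (apply prod_metric; apply ui_metric).
  assert (HD : borel (prod_dist ui_dist ui_dist) D).
  { apply borel_inter2;
      [apply (borel_preimage_total _ ui_dist fst Hm (fst_continuous _ _) _ on_image_borel)|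
       apply (borel_preimage_total _ ui_dist snd Hm (snd_continuous _ _) _ on_baire_image_borel)]. }
  apply borel_ext with (fun p : unit_interval * unit_interval =>
                         ~ on_image (fst p) \/ (D p /\ mv_graph diagF (phi p))).
  - apply borel_union2; [apply borel_compl|].
    + apply (borel_preimage_total _ ui_dist fst Hm (fst_continuous _ _) _ on_image_borel).
    + apply (borel_preimage _ (prod_dist cantor_dist baire_dist) Hm D phi HD inverse_pair_continuous).
      apply mvF_graph_borel, diag_rel_closed.
  - intros [t u]; unfold mv_graph, transF, D, phi; simpl; split.
    + intros [Hoff|[[Ht Hu] Hgraph]]; [left; exact Hoff|right].
      exists (cantor_real_inv t), (baire_real_inv u); repeat split; auto.
      * apply inv_on_spec, Ht.
      * symmetry; apply (inv_on_spec baire_real), Hu.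
    + intros [Hoff|[x [y [Hx [Hy Hgraph]]]]]; [left; exact Hoff|right].
      assert (Ht : on_image t) by (exists x; exact Hx).
      assert (Hu : on_baire_image u) by (exists y; symmetry; exact Hy).
      replace (cantor_real_inv t) with x
        by (apply cantor_real_inj; unfold cantor_real_inv; rewrite inv_on_spec; auto).
      replace (baire_real_inv u) with y
        by (apply baire_cantor_inj, cantor_real_inj;
            change (baire_real y = baire_real (baire_real_inv u));
            unfold baire_real_inv; rewrite (inv_on_spec baire_real); auto).
      auto.
Qed.

Theorem part_b : exists F : unit_interval -> unit_interval -> Prop,
  multi_valued F /\
  borel (prod_dist ui_dist ui_dist) (mv_graph F) /\
  analytic ui_dist (mv_continuity_points ui_dist ui_dist F) /\
  ~ borel ui_dist (mv_continuity_points ui_dist ui_dist F).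
Proof.
  exists transF; split; [apply transF_multi_valued|split; [apply transF_graph_borel|]].
  split; [apply transF_analytic|apply transF_not_borel].
Qed.

Theorem theorem2p9 :
  (exists F : cantor -> baire -> Prop,
     multi_valued F /\
     (forall x, closed_in baire_dist (F x)) /\
     borel (prod_dist cantor_dist baire_dist) (mv_graph F) /\
     analytic cantor_dist (mv_continuity_points cantor_dist baire_dist F) /\
     ~ borel cantor_dist (mv_continuity_points cantor_dist baire_dist F))
  /\
  (exists F : unit_interval -> unit_interval -> Prop,
     multi_valued F /\
     borel (prod_dist ui_dist ui_dist) (mv_graph F) /\
     analytic ui_dist (mv_continuity_points ui_dist ui_dist F) /\
     ~ borel ui_dist (mv_continuity_points ui_dist ui_dist F)).
Proof.
  split; [exact part_a|exact part_b].
Qed.
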